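(* Let $\mathbf{A}\in\mathbb{R}^{m\times n}$, $l=\min\{m,n\}$, $r=\mathrm{rank}(\mathbf{A})$, $\mu,\nu\in[0,\infty)$, and define $\lambda\in[0,\infty]$ by $\lambda^2=0$ if $\mu=0$; $\lambda^2=\mu^2/|\mathbf{A}\mathbf{A}^T|^\nu$ if $\mu>0$ and $|\mathbf{A}\mathbf{A}^T|^\nu>0$; and $\lambda^2=\infty$ if $\mu>0$ and $|\mathbf{A}\mathbf{A}^T|^\nu=0$. Let $\sigma_1\ge\cdots\ge\sigma_l\ge0$ be the singular values of $\mathbf{A}$. Then $\|\mathbf{A}^{*(\lambda)}\|\le\min\{M_1,M_2\}$, where $M_1=0$ if $\mathbf{A}=\mathbf{0}$ and $M_1=1/\sigma_r$ if $\mathbf{A}\neq\mathbf{0}$, and $M_2=\infty$ if $\mu=0$ and $M_2=\frac{1}{2\mu}\prod_{i=1}^l\sigma_i^\nu$ if $\mu>0$. Moreover, if $\mu>0$ then $\|\mathbf{A}^{*(\lambda)}\|\le\frac{1}{2\mu}\|\mathbf{A}\|^{\nu l}$.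
   Context: $|\cdot|$ denotes the determinant, with the convention $0^0=1$. $\|\cdot\|$ is the spectral norm. For $\lambda\in[0,\infty]$ the (extended) damped pseudoinverse is $\mathbf{A}^{*(\lambda)}=\mathbf{A}^T(\mathbf{A}\mathbf{A}^T+\lambda^2\mathbf{I}_m)^+$ if $\lambda<\infty$ and $\mathbf{A}^{*(\infty)}=\mathbf{0}\in\mathbb{R}^{n\times m}$, where ${}^+$ is the Moore–Penrose pseudoinverse. *)

From HB Require Import structures.
From Stdlib Require Import Reals Lra ClassicalEpsilon FunctionalExtensionality.
From mathcomp Require Import all_boot all_order all_algebra.

Set Implicit Arguments.
Unset Strict Implicit.
Unset Printing Implicit Defensive.

Definition R_eqb (x y : R) : bool := if Req_EM_T x y then true else false.

Lemma R_eqP : Equality.axiom R_eqb.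
Proof. move=> x y; rewrite /R_eqb; case: Req_EM_T => h; by constructor. Qed.

HB.instance Definition _ := hasDecEq.Build R R_eqP.

Definition R_find (P : pred R) (n : nat) : option R :=
  match excluded_middle_informative (exists x, P x) with
  | left h => Some (proj1_sig (constructive_indefinite_description _ h))
  | right _ => None
  end.

Lemma R_find_correct P n x : R_find P n = Some x -> P x.
Proof.
rewrite /R_find; case: excluded_middle_informative => // h [<-].
exact: proj2_sig (constructive_indefinite_description _ h).
Qed.

Lemma R_find_complete (P : pred R) : (exists x, P x) -> exists n, R_find P n.
Proof. move=> h; exists 0%N; rewrite /R_find; by case: excluded_middle_informative. Qed.

Lemma R_find_ext (P Q : pred R) : P =1 Q -> R_find P =1 R_find Q.
Proof. by move=> /functional_extensionality ->. Qed.

HB.instance Definition _ :=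
  hasChoice.Build R R_find_correct R_find_complete R_find_ext.

Lemma R_addA : associative Rplus. Proof. move=> *; ring. Qed.
Lemma R_addC : commutative Rplus. Proof. move=> *; ring. Qed.
Lemma R_add0 : left_id R0 Rplus. Proof. move=> *; ring. Qed.
Lemma R_addN : left_inverse R0 Ropp Rplus. Proof. move=> *; ring. Qed.

HB.instance Definition _ := GRing.isZmodule.Build R R_addA R_addC R_add0 R_addN.

Lemma R_mulA : associative Rmult. Proof. move=> *; ring. Qed.
Lemma R_mulC : commutative Rmult. Proof. move=> *; ring. Qed.
Lemma R_mul1 : left_id R1 Rmult. Proof. move=> *; ring. Qed.
Lemma R_mulDl : @left_distributive R R Rmult Rplus. Proof. move=> *; ring. Qed.
Lemma R_one_neq0 : R1 != R0. Proof. by apply/R_eqP; exact: R1_neq_R0. Qed.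

HB.instance Definition _ :=
  GRing.Zmodule_isComNzRing.Build R R_mulA R_mulC R_mul1 R_mulDl R_one_neq0.

Lemma R_mulVf (x : R) : x != (0 : R)%R -> GRing.mul (Rinv x) x = (1 : R)%R.
Proof. move=> /R_eqP h; exact: Rinv_l. Qed.
Lemma R_inv0 : Rinv (0 : R)%R = (0 : R)%R. Proof. exact: Rinv_0. Qed.

HB.instance Definition _ := GRing.ComNzRing_isField.Build R R_mulVf R_inv0.

Local Open Scope ring_scope.

(* real power x^y for x >= 0, y >= 0, with the convention 0^0 = 1
   (and 0^y = 0 for y > 0). *)
Definition rpow (x y : R) : R :=
  if x == 0 then (if y == 0 then 1 else 0) else Rpower x y.

Definition vnorm n (x : 'cV[R]_n) : R := sqrt (\sum_(i < n) x i 0 ^+ 2).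

Definition spec_norm m n (B : 'M[R]_(m, n)) : R :=
  epsilon (inhabits R0)
    (is_lub (fun c => exists x : 'cV[R]_n,
                 Rle (vnorm x) R1 /\ c = vnorm (B *m x))).

(* Moore-Penrose pseudoinverse: the unique X satisfying the Penrose equations *)
Definition penrose m n (M : 'M[R]_(m, n)) (X : 'M[R]_(n, m)) : Prop :=
  [/\ M *m X *m M = M, X *m M *m X = X,
      (M *m X)^T = M *m X & (X *m M)^T = X *m M].

Definition pinv m n (M : 'M[R]_(m, n)) : 'M[R]_(n, m) :=
  epsilon (inhabits 0) (penrose M).

Inductive extR := Fin of R | Inf.

Definition damped_pinv m n (A : 'M[R]_(m, n)) (lam : extR) : 'M[R]_(n, m) :=
  match lam with
  | Fin l => A^T *m pinv (A *m A^T + (l ^+ 2)%:M)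
  | Inf => 0
  end.

Definition lambda_of m n (A : 'M[R]_(m, n)) (mu nu : R) : extR :=
  let d := rpow (\det (A *m A^T)) nu in
  if mu == 0 then Fin 0
  else if Rlt_dec R0 d then Fin (sqrt (Rdiv (mu ^+ 2) d))
  else Inf.

(* sigma (indexed 0 .. l-1, l = minn m n) is the sequence of singular values of
   A: nonnegative, nonincreasing, and A = U diag(sigma) V^T with U, V orthogonal. *)
Definition singular_values m n (A : 'M[R]_(m, n)) (sigma : nat -> R) : Prop :=
  [/\ forall i, (i < minn m n)%N -> Rle 0 (sigma i),
      forall i j, (i <= j)%N -> (j < minn m n)%N -> Rle (sigma j) (sigma i)
    & exists (U : 'M[R]_m) (V : 'M[R]_n),
        [/\ U^T *m U = 1%:M, V^T *m V = 1%:M &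
            A = U *m (\matrix_(i < m, j < n)
                        if (i : nat) == j then sigma i else 0) *m V^T]].

(* Write A = U S V^T with U, V orthogonal and S the rectangular diagonal
   matrix of the singular values s_0 >= ... >= s_(l-1) >= 0.  For a finite
   damping parameter L the Penrose equations identify
     A^T (A A^T + L^2 I)^+ = V D U^T,  D_kk = s_k / (s_k^2 + L^2),
   so the spectral norm of the damped pseudoinverse is at most any bound on
   the entries D_kk.  Two such bounds are used: D_kk <= 1/s_k <= 1/s_(r-1)
   (r = rank A = number of positive singular values), and the AM-GM bound
   D_kk <= 1/(2L).  With L^2 = mu^2 / |A A^T|^nu, and |A A^T| = prod s_k^2,
   the latter gives 1/(2L) <= (1/(2mu)) prod s_k^nu; the infinite damping
   parameter gives the zero matrix.  Finally s_k <= ||A|| yields the bound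
   in terms of ||A||. *)

From HB Require Import structures.
From Stdlib Require Import Reals Lra ClassicalEpsilon.
From mathcomp Require Import all_boot all_order all_algebra.
Local Open Scope ring_scope.
Import GRing.Theory.
Set Implicit Arguments.
Unset Strict Implicit.

(* The ring operations of R are by definition those of Stdlib's reals; this
   tactic exposes them so that lra/nra can be used on MathComp notation. *)
Ltac toR := repeat match goal with
  | |- context[@GRing.zero ?T] => change (@GRing.zero T) with R0
  | |- context[@GRing.one ?T] => change (@GRing.one T) with R1
  | |- context[@GRing.add ?T ?x ?y] => change (@GRing.add T x y) with (Rplus x y)
  | |- context[@GRing.mul ?T ?x ?y] => change (@GRing.mul T x y) with (Rmult x y)
  | |- context[@GRing.opp ?T ?x] => change (@GRing.opp T x) with (Ropp x)
  | |- context[@GRing.inv ?T ?x] => change (@GRing.inv T x) with (Rinv x)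
  end.

Lemma sum_le (I : finType) (F G : I -> R) :
  (forall i, Rle (F i) (G i)) -> Rle (\sum_i F i) (\sum_i G i).
Proof.
move=> h; apply: (big_ind2 (fun a b => Rle a b)) => // *; toR; lra.
Qed.

Lemma sum_ge0 (I : finType) (F : I -> R) :
  (forall i, Rle 0 (F i)) -> Rle 0 (\sum_i F i).
Proof. move=> h; apply: (big_ind (fun a => Rle 0 a)) => // *; toR; lra. Qed.

Lemma prod_ge0 (I : finType) (F : I -> R) :
  (forall i, Rle 0 (F i)) -> Rle 0 (\prod_i F i).
Proof.
move=> h; apply: (big_ind (fun a => Rle 0 a)) => //; first by toR; lra.
move=> a b a0 b0; toR; nra.
Qed.

Lemma prod_le (I : finType) (F G : I -> R) :
  (forall i, Rle 0 (F i) /\ Rle (F i) (G i)) ->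
  Rle (\prod_i F i) (\prod_i G i).
Proof.
move=> h.
suff [] : Rle 0 (\prod_i F i) /\ Rle (\prod_i F i) (\prod_i G i) by [].
apply: (big_ind2 (fun a b => Rle 0 a /\ Rle a b)) => //.
- split; toR; lra.
- move=> a b c d [a0 ab] [c0 cd]; toR; split; first nra.
  exact: Rmult_le_compat.
Qed.

(* A family whose terms are pairwise "orthogonal" (F i * F k = 0 for i != k)
   has at most one nonzero term; its sum then behaves like that term. *)
Definition at_most_one_nonzero (I : finType) (F : I -> R) :=
  forall i k, i != k -> F i * F k = 0.

Lemma at_most_one_nonzeroP (I : finType) (F : I -> R) :
  at_most_one_nonzero F ->
  (forall i, F i = 0) \/ exists i0, forall k, k != i0 -> F k = 0.
Proof.
move=> H; case: (pickP (fun i => F i != 0)) => [i0 h0|h].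
  right; exists i0 => k hk; have /eqP := H k i0 hk.
  by rewrite mulf_eq0 (negbTE h0) orbF => /eqP.
by left => i; have /negbFE/eqP := h i.
Qed.

Lemma sqr_sum_one_nonzero (I : finType) (F : I -> R) :
  at_most_one_nonzero F -> (\sum_i F i) ^+ 2 = \sum_i F i ^+ 2.
Proof.
case/at_most_one_nonzeroP => [h|[i0 h]].
  by rewrite !big1 ?expr0n // => i _; rewrite h // expr0n.
rewrite (bigD1 i0) //= big1 ?addr0; last by move=> i /h.
by rewrite (bigD1 i0) //= big1 ?addr0 // => i /h ->; rewrite expr0n.
Qed.

Lemma sum_one_nonzero_le (I : finType) (F : I -> R) c :
  at_most_one_nonzero F -> Rle 0 c ->
  (forall i, Rle (F i) c) -> Rle (\sum_i F i) c.
Proof.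
case/at_most_one_nonzeroP => [h|[i0 h]] c0 hc.
  by rewrite big1 // => i _; rewrite h.
by rewrite (bigD1 i0) //= big1 ?addr0 // => i /h.
Qed.

Definition rdiag p q (a : nat -> R) : 'M[R]_(p, q) :=
  \matrix_(i < p, j < q) if (i : nat) == j then a i else 0.

Lemma rdiag_tr p q a : (rdiag p q a)^T = rdiag q p a.
Proof. by apply/matrixP => i j; rewrite !mxE eq_sym; case: eqP => // ->. Qed.

Lemma rdiag_ext p q a b : (forall i, (i < minn p q)%N -> a i = b i) ->
  rdiag p q a = rdiag p q b.
Proof.
move=> h; apply/matrixP => i j; rewrite !mxE; case: eqP => // e.
by apply: h; rewrite leq_min ltn_ord /= e ltn_ord.
Qed.

Lemma rdiag_mul p q s a b :
  rdiag p q a *m rdiag q s b =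
  rdiag p s (fun i => if (i < q)%N then a i * b i else 0).
Proof.
apply/matrixP => i k; rewrite !mxE.
case: (ltnP i q) => iq.
  rewrite (bigD1 (Ordinal iq)) //= big1 ?addr0.
    by rewrite !mxE /= eqxx; case: eqP; rewrite ?mulr0.
  move=> j /eqP hj; rewrite !mxE; case: eqP => e; last by rewrite mul0r.
  by exfalso; apply: hj; apply: val_inj; rewrite /= e.
rewrite big1; first by case: eqP.
move=> j _; rewrite !mxE; case: eqP => e; last by rewrite mul0r.
by move: (ltn_ord j); rewrite -e ltnNge iq.
Qed.

Lemma rdiag_mul_sq p a b :
  rdiag p p a *m rdiag p p b = rdiag p p (fun i => a i * b i).
Proof. by rewrite rdiag_mul; apply: rdiag_ext => i; rewrite minnn => ->. Qed.

Lemma rdiag_add p a b :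
  rdiag p p a + rdiag p p b = rdiag p p (fun i => a i + b i).
Proof. by apply/matrixP => i j; rewrite !mxE; case: eqP; rewrite ?addr0. Qed.

Lemma rdiag_diag_mx p a : rdiag p p a = diag_mx (\row_(i < p) a i).
Proof.
apply/matrixP => i j; rewrite !mxE; case: (i =P j) => [->|h]; rewrite ?eqxx ?mxE //.
by case: eqP => // e; case: h; apply: val_inj.
Qed.

Lemma scalar_rdiag p c : c%:M = rdiag p p (fun _ => c).
Proof. by rewrite rdiag_diag_mx; apply/matrixP => i j; rewrite !mxE. Qed.

Lemma det_rdiag p a : \det (rdiag p p a) = \prod_(i < p) a i.
Proof. by rewrite rdiag_diag_mx det_diag; apply: eq_bigr => i _; rewrite mxE. Qed.

Lemma mxrank_unitl m n (P : 'M[R]_m) (B : 'M[R]_(m, n)) :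
  P \in unitmx -> \rank (P *m B) = \rank B.
Proof.
move=> hP; rewrite -mxrank_tr trmx_mul mxrankMfree ?mxrank_tr //.
by rewrite row_free_unit unitmx_tr.
Qed.

Lemma rank_rdiag m n (s : nat -> R) p : (p <= minn m n)%N ->
  (forall k, (k < p)%N -> s k != 0) ->
  (forall k, (p <= k)%N -> (k < minn m n)%N -> s k = 0) ->
  \rank (rdiag m n s) = p.
Proof.
move=> hp hnz hz.
pose w := \row_(i < m) (if (i < p)%N then s i else 1).
have -> : rdiag m n s = diag_mx w *m pid_mx p.
  apply/matrixP => i j; rewrite mul_diag_mx !mxE.
  case: eqP => e /=; last by rewrite mulr0.
  case: ltnP => ip; first by rewrite mulr1.
  by rewrite mulr0 hz // leq_min ltn_ord e ltn_ord.
have hw : diag_mx w \in unitmx.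
  rewrite unitmxE det_diag unitfE; apply/prodf_neq0 => i _; rewrite mxE.
  by case: ltnP => ip; [exact: hnz | exact: oner_neq0].
move: hp; rewrite leq_min => /andP [hm hn].
by rewrite mxrank_unitl // rank_pid_mx.
Qed.

Lemma sumsq_tr n (x : 'cV[R]_n) : \sum_(i < n) x i 0 ^+ 2 = (x^T *m x) 0 0.
Proof. by rewrite !mxE; apply: eq_bigr => i _; rewrite !mxE expr2. Qed.

Lemma sumsq_ge0 n (x : 'cV[R]_n) : Rle 0 (\sum_(i < n) x i 0 ^+ 2).
Proof. by apply: sum_ge0 => i; rewrite expr2; toR; nra. Qed.

Lemma vnorm_ge0 n (x : 'cV[R]_n) : Rle 0 (vnorm x).
Proof. exact: sqrt_pos. Qed.

Lemma vnorm0 n : vnorm (0 : 'cV[R]_n) = 0.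
Proof. by rewrite /vnorm big1 ?sqrt_0 // => i _; rewrite mxE expr0n. Qed.

Lemma vnorm_orth n (Q : 'M[R]_n) x : Q^T *m Q = 1%:M -> vnorm (Q *m x) = vnorm x.
Proof.
by move=> h; rewrite /vnorm !sumsq_tr trmx_mul -mulmxA (mulmxA Q^T) h mul1mx.
Qed.

Lemma orth_tr n (Q : 'M[R]_n) : Q^T *m Q = 1%:M -> Q^T^T *m Q^T = 1%:M.
Proof. by rewrite trmxK => /mulmx1C. Qed.

Lemma vnorm_rdiag_col p (a : nat -> R) : (0 < p)%N ->
  vnorm (rdiag p 1 a) = sqrt (a 0%N * a 0%N).
Proof.
move=> p0; rewrite /vnorm (bigD1 (Ordinal p0)) //= big1 ?addr0.
  by rewrite !mxE /= expr2.
move=> i hi; rewrite !mxE; case: eqP => e; last by rewrite expr0n.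
by case/eqP: hi; apply: val_inj; rewrite /= e.
Qed.

Lemma rdiag_norm_le p q (e : nat -> R) c (x : 'cV[R]_q) :
  Rle 0 c -> (forall k, (k < minn p q)%N -> Rle (e k * e k) (c * c)) ->
  Rle (vnorm (rdiag p q e *m x)) (Rmult c (vnorm x)).
Proof.
move=> c0 he; set E := rdiag p q e.
have rowE i : (E *m x) i 0 ^+ 2 = \sum_j (E i j * x j 0) ^+ 2.
  rewrite mxE sqr_sum_one_nonzero // => j k jk.
  rewrite !mxE; case: eqP => e1; last by rewrite !mul0r.
  case: eqP => e2; last by rewrite mul0r mulr0.
  by case/eqP: jk; apply: val_inj; rewrite /= -e1 -e2.
have colE j : Rle (\sum_(i < p) E i j ^+ 2) (c * c).
  apply: sum_one_nonzero_le; [move=> i k ik | toR; nra | move=> i].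
    rewrite !mxE; case: eqP => e1; last by rewrite expr0n mul0r.
    case: eqP => e2; last by rewrite expr0n mulr0.
    by case/eqP: ik; apply: val_inj; rewrite /= e1 e2.
  rewrite !mxE expr2; case: eqP => e1; last by rewrite mul0r; toR; nra.
  by apply: he; rewrite leq_min ltn_ord e1 ltn_ord.
have key : Rle (\sum_(i < p) (E *m x) i 0 ^+ 2) (c * c * \sum_(j < q) x j 0 ^+ 2).
  under eq_bigr => i _ do rewrite rowE.
  rewrite exchange_big; rewrite -[Rmult (Rmult c c) _]/(GRing.mul (c * c) _).
  rewrite mulr_sumr; apply: sum_le => j.
  under eq_bigr => i _ do rewrite exprMn.
  rewrite -mulr_suml; have := colE j.
  have hx : Rle 0 (x j 0 ^+ 2) by rewrite expr2; toR; nra.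
  move: (\sum_(i < p) E i j ^+ 2) => s hs.
  by have := Rmult_le_compat_r _ _ _ hx hs; toR.
rewrite /vnorm -(sqrt_square c) //; toR.
rewrite -sqrt_mult; [|nra|exact: sumsq_ge0].
exact: sqrt_le_1_alt.
Qed.

Lemma orth_rdiag_norm_le m n (U : 'M[R]_m) (V : 'M[R]_n) e c :
  U^T *m U = 1%:M -> V^T *m V = 1%:M -> Rle 0 c ->
  (forall k, (k < minn m n)%N -> Rle (e k * e k) (c * c)) ->
  forall x : 'cV_n, Rle (vnorm x) R1 ->
    Rle (vnorm (U *m rdiag m n e *m V^T *m x)) c.
Proof.
move=> hU hV c0 he x hx.
rewrite -!mulmxA vnorm_orth //.
apply: Rle_trans (rdiag_norm_le _ c0 he) _.
rewrite vnorm_orth; last exact: orth_tr.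
by have := vnorm_ge0 x; nra.
Qed.

Lemma spec_norm_lub m n (B : 'M[R]_(m, n)) c :
  (forall x : 'cV_n, Rle (vnorm x) R1 -> Rle (vnorm (B *m x)) c) ->
  is_lub (fun c => exists x : 'cV[R]_n, Rle (vnorm x) R1 /\ c = vnorm (B *m x))
    (spec_norm B).
Proof.
move=> hc; rewrite /spec_norm; apply: epsilon_spec.
set E := (fun c => exists x : 'cV[R]_n, _).
have bounded : bound E by exists c => y [x [hx ->]]; apply: hc.
have inhabited : exists y, E y.
  by exists (vnorm (B *m 0)), 0; split => //; rewrite vnorm0; toR; lra.
by have [l hl] := completeness E bounded inhabited; exists l.
Qed.

Lemma spec_norm_le m n (B : 'M[R]_(m, n)) c :
  (forall x : 'cV_n, Rle (vnorm x) R1 -> Rle (vnorm (B *m x)) c) ->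
  Rle (spec_norm B) c.
Proof.
by move=> hc; have [_ h] := spec_norm_lub hc; apply: h => y [x [hx ->]]; exact: hc.
Qed.

Lemma spec_norm_ge m n (B : 'M[R]_(m, n)) c (x : 'cV_n) :
  (forall x : 'cV_n, Rle (vnorm x) R1 -> Rle (vnorm (B *m x)) c) ->
  Rle (vnorm x) R1 -> Rle (vnorm (B *m x)) (spec_norm B).
Proof. by move=> hc hx; have [h _] := spec_norm_lub hc; apply: h; exists x. Qed.

Lemma spec_norm0_le m n c : Rle 0 c -> Rle (spec_norm (0 : 'M[R]_(m, n))) c.
Proof. by move=> c0; apply: spec_norm_le => x _; rewrite mul0mx vnorm0. Qed.

Lemma penrose_uniq m n (M : 'M[R]_(m, n)) X Y :
  penrose M X -> penrose M Y -> X = Y.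
Proof.
case=> MXM XMX MXs XMs [MYM YMY MYs YMs].
have MtY : M^T = M^T *m M *m Y by rewrite -{1}MYM trmx_mul MYs mulmxA.
have MtX : M^T = X *m M *m M^T.
  by rewrite -{1}MXM -[M *m X *m M]mulmxA trmx_mul XMs.
have eX : X = X *m M *m Y.
  transitivity (X *m (M *m X)^T); first by rewrite MXs mulmxA XMX.
  transitivity (X *m X^T *m M^T); first by rewrite trmx_mul mulmxA.
  by rewrite MtY !mulmxA -(mulmxA X X^T) -trmx_mul MXs mulmxA XMX.
have eY : Y = X *m M *m Y.
  transitivity ((Y *m M)^T *m Y); first by rewrite YMs YMY.
  transitivity (M^T *m Y^T *m Y); first by rewrite trmx_mul.
  by rewrite MtX -!mulmxA (mulmxA M^T) -trmx_mul YMs YMY.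
by rewrite eX -eY.
Qed.

Lemma pinv_eq m n (M : 'M[R]_(m, n)) X : penrose M X -> pinv M = X.
Proof.
move=> hX; apply: (penrose_uniq (M := M)) => //.
by rewrite /pinv; apply: epsilon_spec; exists X.
Qed.

Lemma conj_orth_mul m (U A B : 'M[R]_m) : U^T *m U = 1%:M ->
  (U *m A *m U^T) *m (U *m B *m U^T) = U *m (A *m B) *m U^T.
Proof. by move=> hU; rewrite -!mulmxA (mulmxA U^T U) hU mul1mx. Qed.

Lemma conj_orth_tr m (U A : 'M[R]_m) : (U *m A *m U^T)^T = U *m A^T *m U^T.
Proof. by rewrite !trmx_mul trmxK mulmxA. Qed.

Lemma pinv_orth_rdiag m (U : 'M[R]_m) d : U^T *m U = 1%:M ->
  pinv (U *m rdiag m m d *m U^T) = U *m rdiag m m (fun i => (d i)^-1) *m U^T.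
Proof.
move=> hU; apply: pinv_eq; split.
- rewrite !conj_orth_mul // !rdiag_mul_sq; congr (_ *m _ *m _).
  apply: rdiag_ext => i _; have [->|/eqP di] := d i =P 0; first by rewrite !mul0r.
  by rewrite mulfV ?mul1r.
- rewrite !conj_orth_mul // !rdiag_mul_sq; congr (_ *m _ *m _).
  apply: rdiag_ext => i _; have [->|/eqP di] := d i =P 0; first by rewrite invr0 !mul0r.
  by rewrite mulVf ?mul1r.
- by rewrite conj_orth_mul // conj_orth_tr rdiag_mul_sq rdiag_tr.
- by rewrite conj_orth_mul // conj_orth_tr rdiag_mul_sq rdiag_tr.
Qed.

Section SVDForm.
Variables (m n : nat) (U : 'M[R]_m) (V : 'M[R]_n) (s : nat -> R).
Hypotheses (hU : U^T *m U = 1%:M) (hV : V^T *m V = 1%:M).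
Let S := rdiag m n s.

(* The diagonal of S S^T: s_i^2 for i < n, then zeros. *)
Definition gram_diag i := if (i < n)%N then s i * s i else 0.

Lemma svd_tr : (U *m S *m V^T)^T = V *m rdiag n m s *m U^T.
Proof. by rewrite !trmx_mul trmxK rdiag_tr mulmxA. Qed.

Lemma svd_gram :
  (U *m S *m V^T) *m (U *m S *m V^T)^T = U *m rdiag m m gram_diag *m U^T.
Proof.
by rewrite svd_tr -!mulmxA (mulmxA V^T V) hV mul1mx !mulmxA -(mulmxA U) rdiag_mul.
Qed.

Lemma svd_damped_pinv c :
  (U *m S *m V^T)^T *m pinv ((U *m S *m V^T) *m (U *m S *m V^T)^T + c%:M)
  = V *m rdiag n m (fun i => if (i < m)%N then s i * (gram_diag i + c)^-1 else 0)
      *m U^T.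
Proof.
have UUt : U *m U^T = 1%:M by apply: mulmx1C.
have -> : (c%:M : 'M[R]_m) = U *m rdiag m m (fun _ => c) *m U^T.
  by rewrite -scalar_rdiag scalar_mxC -mulmxA UUt mulmx1.
rewrite svd_gram -mulmxDl -mulmxDr rdiag_add pinv_orth_rdiag // svd_tr.
by rewrite -!mulmxA (mulmxA U^T U) hU mul1mx !mulmxA -(mulmxA V) rdiag_mul.
Qed.

Lemma svd_det_gram :
  \det ((U *m S *m V^T) *m (U *m S *m V^T)^T) = \prod_(i < m) gram_diag i.
Proof.
have detU2 : \det U * \det U = 1 by rewrite -{1}det_tr -det_mulmx hU det1.
by rewrite svd_gram !det_mulmx det_rdiag det_tr mulrAC detU2 mul1r.
Qed.

End SVDForm.

Lemma nonincreasing_split (s : nat -> R) l :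
  (forall i, (i < l)%N -> Rle 0 (s i)) ->
  (forall i j, (i <= j)%N -> (j < l)%N -> Rle (s j) (s i)) ->
  exists p, [/\ (p <= l)%N, forall k, (k < p)%N -> Rlt 0 (s k)
              & forall k, (p <= k)%N -> (k < l)%N -> s k = 0].
Proof.
move=> s0 smono; set p := find (fun k => s k == 0) (iota 0 l).
have pl : (p <= l)%N.
  by have := find_size (fun k => s k == 0) (iota 0 l); rewrite size_iota.
exists p; split => // k kp.
  have kl := leq_trans kp pl; have := before_find 0%N kp.
  rewrite nth_iota ?add0n // => /negbT/eqP; have := s0 k kl; toR => *; lra.
move=> kl; have pl' := leq_ltn_trans kp kl.
have hp : has (fun k => s k == 0) (iota 0 l) by rewrite has_find size_iota.
have /eqP := nth_find 0%N hp; rewrite nth_iota ?add0n // => sp.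
by have := smono _ _ kp kl; have := s0 k kl; rewrite -/p sp; toR => *; lra.
Qed.

Lemma exprE (x : R) k : x ^+ k = pow x k.
Proof. by elim: k => [|k IH]; rewrite ?expr0 // exprS IH. Qed.

Lemma Rpower_1x y : Rpower 1 y = 1.
Proof. by rewrite /Rpower ln_1 Rmult_0_r exp_0. Qed.

Lemma Rpower_prod (I : finType) (F : I -> R) y : (forall i, Rlt 0 (F i)) ->
  Rpower (\prod_i F i) y = \prod_i Rpower (F i) y.
Proof.
move=> h.
suff [] : Rlt 0 (\prod_i F i) /\ Rpower (\prod_i F i) y = \prod_i Rpower (F i) y by [].
apply: (big_ind2 (fun a b => Rlt 0 a /\ Rpower a y = b)) => //.
- by split; [toR; lra | exact: Rpower_1x].
- move=> a b c d [a0 <-] [c0 <-]; split; first by toR; nra.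
  by toR; rewrite Rpower_mult_distr.
Qed.

Section ScalarFacts.
Local Open Scope R_scope.

Lemma rpow_ge0 x y : 0 <= rpow x y.
Proof.
rewrite /rpow; case: (x =P GRing.zero) => _; last by left; apply: exp_pos.
by case: (y =P GRing.zero) => _; toR; lra.
Qed.

Lemma rpow_nz x y : x <> 0 -> rpow x y = Rpower x y.
Proof. by rewrite /rpow; case: (x =P GRing.zero). Qed.

Lemma rpow_y0 x : rpow x 0 = 1.
Proof.
rewrite /rpow; case: (x =P GRing.zero) => _; first by rewrite eqxx.
by rewrite /Rpower Rmult_0_l exp_0.
Qed.

Lemma rpow_0x y : y <> 0 -> rpow 0 y = 0.
Proof. by move=> h; rewrite /rpow eqxx; case: (y =P GRing.zero). Qed.

Lemma rpow_le a b y : 0 <= a -> a <= b -> 0 <= y -> rpow a y <= rpow b y.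
Proof.
move=> a0 ab y0.
have [->|yn] := Req_dec y 0; first by rewrite !rpow_y0; lra.
have [->|an] := Req_dec a 0; first by rewrite rpow_0x //; exact: rpow_ge0.
by rewrite !rpow_nz; try lra; apply: Rle_Rpower_l; lra.
Qed.

Lemma rpow_pow a y k : 0 <= a -> 0 <= y -> (rpow a y) ^+ k = rpow a (y * INR k).
Proof.
move=> a0 y0; have [->|an] := Req_dec a 0; last first.
  by rewrite !rpow_nz // -Rpower_mult Rpower_pow ?exprE //; exact: exp_pos.
have [->|yn] := Req_dec y 0; first by rewrite Rmult_0_l !rpow_y0 expr1n.
case: k => [|k]; first by rewrite expr0 Rmult_0_r rpow_y0.
rewrite rpow_0x // expr0n rpow_0x // S_INR; have := pos_INR k; nra.
Qed.

Lemma damped_entry_ge0 s L : 0 <= s -> 0 <= L -> 0 <= s * / (s * s + L).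
Proof.
move=> s0 L0; have [->|h] := Req_dec (s * s + L) 0; first by rewrite Rinv_0; lra.
by apply: Rmult_le_pos => //; left; apply: Rinv_0_lt_compat; nra.
Qed.

Lemma damped_entry_le_inv s L : 0 < s -> 0 <= L -> s * / (s * s + L) <= / s.
Proof.
move=> s0 L0; have h : 0 < s * s + L by nra.
apply: (Rmult_le_reg_r (s * (s * s + L))); first nra.
have -> : s * / (s * s + L) * (s * (s * s + L)) = s * s by field; lra.
have -> : / s * (s * (s * s + L)) = s * s + L by field; lra.
lra.
Qed.

(* Since s^2 + t^2 >= 2 s t, the entry for L = t^2 is at most 1/(2t). *)
Lemma damped_entry_le_half s t : 0 <= s -> 0 < t -> s * / (s * s + t * t) <= / (2 * t).
Proof.
move=> s0 t0; have h : 0 < s * s + t * t by nra.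
apply: (Rmult_le_reg_r (2 * t * (s * s + t * t))); first nra.
have -> : s * / (s * s + t * t) * (2 * t * (s * s + t * t)) = 2 * t * s by field; lra.
have -> : / (2 * t) * (2 * t * (s * s + t * t)) = s * s + t * t by field; lra.
have := Rle_0_sqr (s - t); rewrite /Rsqr; nra.
Qed.

End ScalarFacts.

Section SingularValues.
Variables (m n : nat) (A : 'M[R]_(m, n)) (sigma : nat -> R).
Variables (U : 'M[R]_m) (V : 'M[R]_n).
Hypothesis sigma_ge0 : forall i, (i < minn m n)%N -> Rle 0 (sigma i).
Hypothesis sigma_mono :
  forall i j, (i <= j)%N -> (j < minn m n)%N -> Rle (sigma j) (sigma i).
Hypotheses (hU : U^T *m U = 1%:M) (hV : V^T *m V = 1%:M).
Hypothesis hA : A = U *m rdiag m n sigma *m V^T.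

Local Notation l := (minn m n).
Local Notation M1 := (if A == 0 then 0 else Rinv (sigma (\rank A).-1)).

Lemma rank_svd :
  [/\ (\rank A <= l)%N, forall k, (k < \rank A)%N -> Rlt 0 (sigma k)
    & forall k, (\rank A <= k)%N -> (k < l)%N -> sigma k = 0].
Proof.
have [p [pl spos szero]] := nonincreasing_split sigma_ge0 sigma_mono.
suff -> : \rank A = p by split.
rewrite hA mxrankMfree; last by rewrite row_free_unit unitmx_tr; case: (mulmx1_unit hV).
rewrite mxrank_unitl; last by case: (mulmx1_unit hU).
apply: rank_rdiag => // k /spos sk; apply/eqP => s0; move: sk; rewrite s0; toR; lra.
Qed.

Lemma inv_sv_le_M1 k : (k < l)%N -> Rlt 0 (sigma k) -> Rle (Rinv (sigma k)) M1.
Proof.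
move=> kl sk; have [rl spos szero] := rank_svd.
have kr : (k < \rank A)%N.
  by rewrite ltnNge; apply/negP => rk; move: sk; rewrite szero //; toR; lra.
have r0 : (0 < \rank A)%N := leq_ltn_trans (leq0n k) kr.
have -> : (A == 0) = false by apply/negP => /eqP A0; move: r0; rewrite A0 mxrank0.
apply: Rinv_le_contravar; first by apply: spos; rewrite prednK.
apply: sigma_mono; first by rewrite -ltnS prednK.
by rewrite prednK //; exact: leq_trans rl.
Qed.

Lemma M1_ge0 : Rle 0 M1.
Proof.
case: eqP => [_|/eqP A0]; first by toR; lra.
have [rl spos _] := rank_svd.
have r0 : (0 < \rank A)%N by rewrite lt0n mxrank_eq0.
by left; apply: Rinv_0_lt_compat; apply: spos; rewrite prednK.
Qed.

Lemma damped_entry_le_M1 L k : (k < l)%N ->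
  Rle (sigma k * (sigma k * sigma k + L ^+ 2)^-1) M1.
Proof.
move=> kl; have [->|sk] := Req_dec (sigma k) 0.
  by toR; rewrite Rmult_0_l; exact: M1_ge0.
have sk' : Rlt 0 (sigma k) by have := sigma_ge0 kl; lra.
apply: Rle_trans (inv_sv_le_M1 kl sk'); rewrite expr2; toR.
by apply: damped_entry_le_inv => //; nra.
Qed.

Lemma damped_pinv_norm_le L c : Rle 0 c ->
  (forall k, (k < l)%N -> Rle (sigma k * (sigma k * sigma k + L ^+ 2)^-1) c) ->
  Rle (spec_norm (damped_pinv A (Fin L))) c.
Proof.
move=> c0 hc; rewrite /damped_pinv hA svd_damped_pinv //.
apply: spec_norm_le => x hx; apply: orth_rdiag_norm_le => // k.
rewrite minnC => kl; have /andP [km kn] : (k < m)%N && (k < n)%N by rewrite -leq_min.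
have entry_ge0 : Rle 0 (sigma k * (sigma k * sigma k + L ^+ 2)^-1).
  by rewrite expr2; toR; apply: damped_entry_ge0; [exact: sigma_ge0 | nra].
by rewrite km /gram_diag kn; apply: Rmult_le_compat => //; apply: hc.
Qed.

Lemma gram_det_nz_full_rank : \det (A *m A^T) != 0 ->
  (m <= n)%N /\ forall i, (i < m)%N -> Rlt 0 (sigma i).
Proof.
rewrite hA svd_det_gram // => /prodf_neq0 gram_nz.
have mn : (m <= n)%N.
  rewrite leqNgt; apply/negP => nm.
  by have := gram_nz (Ordinal nm) isT; rewrite /gram_diag ltnn eqxx.
split=> // i im; have := gram_nz (Ordinal im) isT.
rewrite /gram_diag /= (leq_trans im mn).
have := sigma_ge0 (i := i); rewrite leq_min im (leq_trans im mn) => /(_ isT) si0 si.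
have : sigma i != 0 by apply: contraNneq si => ->; rewrite mul0r.
by move/eqP; move: si0; toR => *; lra.
Qed.

Lemma sqrt_rpow_gram_det nu : Rlt 0 (rpow (\det (A *m A^T)) nu) ->
  sqrt (rpow (\det (A *m A^T)) nu) = \prod_(i < l) rpow (sigma i) nu.
Proof.
have [->|nu0] := Req_dec nu 0.
  by rewrite rpow_y0 sqrt_1 big1 // => i _; rewrite rpow_y0.
move=> d_pos; have det_nz : \det (A *m A^T) != 0.
  by apply/eqP => d0; move: d_pos; rewrite d0 rpow_0x //; lra.
have [mn spos] := gram_det_nz_full_rank det_nz.
have sq_pos (i : 'I_m) : Rlt 0 (sigma i * sigma i).
  by have := spos i (ltn_ord i); toR; nra.
move: det_nz; rewrite hA svd_det_gram // (minn_idPl mn).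
rewrite (eq_bigr (fun i : 'I_m => sigma i * sigma i)); last first.
  by move=> i _; rewrite /gram_diag (leq_trans (ltn_ord i) mn).
move=> /eqP prod_nz; rewrite rpow_nz // Rpower_prod //.
rewrite (eq_bigr (fun i : 'I_m => Rpower (sigma i) nu * Rpower (sigma i) nu)); last first.
  by move=> i _; rewrite -Rpower_mult_distr //; exact: spos.
rewrite big_split /= sqrt_square; last by apply: prod_ge0 => i; left; exact: exp_pos.
by apply: eq_bigr => i _; rewrite rpow_nz //; have := spos i (ltn_ord i); lra.
Qed.

(* The bound 1/(2 lambda) = (1/(2 mu)) sqrt(|A A^T|^nu) on the entries of
   the damped pseudoinverse. *)
Lemma damped_pinv_norm_le_M2 mu nu : Rlt 0 mu ->
  Rlt 0 (rpow (\det (A *m A^T)) nu) ->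
  Rle (spec_norm (damped_pinv A
         (Fin (sqrt (Rdiv (mu ^+ 2) (rpow (\det (A *m A^T)) nu))))))
      (Rmult (Rinv (Rmult 2 mu)) (\prod_(i < l) rpow (sigma i) nu)).
Proof.
set d := rpow _ nu => mu0 d0; rewrite -sqrt_rpow_gram_det // -/d.
have q0 : Rlt 0 (sqrt d) by apply: sqrt_lt_R0.
have lambdaE : sqrt (Rdiv (mu ^+ 2) d) = Rdiv mu (sqrt d).
  by rewrite sqrt_div ?expr2 ?sqrt_square //; toR; nra.
have -> : Rmult (Rinv (Rmult 2 mu)) (sqrt d) = Rinv (Rmult 2 (Rdiv mu (sqrt d))).
  by field; split; lra.
rewrite lambdaE; apply: damped_pinv_norm_le => [|k kl].
  left; apply: Rinv_0_lt_compat.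
  by apply: Rmult_lt_0_compat; [lra | exact: Rdiv_lt_0_compat].
rewrite expr2; toR; apply: damped_entry_le_half; first exact: sigma_ge0.
exact: Rdiv_lt_0_compat.
Qed.

Lemma svd_norm_bound (x : 'cV_n) : Rle (vnorm x) R1 ->
  Rle (vnorm (A *m x)) (Rabs (sigma 0%N)).
Proof.
rewrite hA; apply: orth_rdiag_norm_le => //; first exact: Rabs_pos.
move=> k kl; have l0 : (0 < l)%N := leq_ltn_trans (leq0n k) kl.
rewrite Rabs_pos_eq; last exact: sigma_ge0.
have sk := sigma_ge0 kl; have s0k := sigma_mono (leq0n k) kl.
exact: Rmult_le_compat.
Qed.

Lemma spec_norm_svd_ge0 : Rle 0 (spec_norm A).
Proof.
have x0 : Rle (vnorm (0 : 'cV[R]_n)) R1 by rewrite vnorm0; toR; lra.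
by have := spec_norm_ge svd_norm_bound x0; rewrite mulmx0 vnorm0.
Qed.

(* The first right singular vector V e_0 is mapped to a vector of norm
   sigma_0, so every singular value is at most ||A||. *)
Lemma sv_le_spec_norm i : (i < l)%N -> Rle (sigma i) (spec_norm A).
Proof.
move=> il; have l0 : (0 < l)%N := leq_ltn_trans (leq0n i) il.
apply: Rle_trans (sigma_mono (leq0n i) il) _.
move: (l0); rewrite leq_min => /andP [m0 n0].
set e0 := V *m rdiag n 1 (fun _ => 1).
have e0_unit : Rle (vnorm e0) R1.
  by rewrite vnorm_orth // vnorm_rdiag_col //; toR; rewrite Rmult_1_r sqrt_1; lra.
have := spec_norm_ge svd_norm_bound e0_unit.
rewrite /e0 hA -!mulmxA (mulmxA V^T V) hV mul1mx vnorm_orth //.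
rewrite rdiag_mul vnorm_rdiag_col //.
by rewrite n0 mulr1 sqrt_square //; exact: sigma_ge0.
Qed.

Lemma prod_rpow_sv_le nu : Rle 0 nu ->
  Rle (\prod_(i < l) rpow (sigma i) nu) (rpow (spec_norm A) (Rmult nu (INR l))).
Proof.
move=> nu0; rewrite -rpow_pow //; last exact: spec_norm_svd_ge0.
have -> : rpow (spec_norm A) nu ^+ l = \prod_(i < l) rpow (spec_norm A) nu.
  by rewrite prodr_const card_ord.
apply: prod_le => i; split; first exact: rpow_ge0.
by apply: rpow_le => //; [exact: sigma_ge0 | exact: sv_le_spec_norm].
Qed.

Lemma damped_pinv_norm_le_M1 L : Rle (spec_norm (damped_pinv A (Fin L))) M1.
Proof. exact: damped_pinv_norm_le M1_ge0 (damped_entry_le_M1 L). Qed.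

End SingularValues.

Theorem lemma7 (m n : nat) (A : 'M[R]_(m, n)) (mu nu : R) (sigma : nat -> R) :
  Rle 0 mu -> Rle 0 nu ->
  singular_values A sigma ->
  let l := minn m n in
  let r := \rank A in
  let Astar := damped_pinv A (lambda_of A mu nu) in
  let M1 := if A == 0 then 0 else Rinv (sigma r.-1) in
  let M2 := Rmult (Rinv (Rmult 2 mu)) (\prod_(i < l) rpow (sigma i) nu) in
  Rle (spec_norm Astar) (if mu == 0 then M1 else Rmin M1 M2) /\
  (Rlt 0 mu ->
     Rle (spec_norm Astar)
         (Rmult (Rinv (Rmult 2 mu)) (rpow (spec_norm A) (Rmult nu (INR l))))).
Proof.
move=> mu0 nu0 [sigma_ge0 sigma_mono [U [V [hU hV hA]]]] l r Astar M1 M2.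
have inv2mu_ge0 : Rlt 0 mu -> Rle 0 (Rinv (Rmult 2 mu)).
  by move=> mu_pos; left; apply: Rinv_0_lt_compat; lra.
have M2_ge0 : Rlt 0 mu -> Rle 0 M2.
  move=> /inv2mu_ge0 ?; apply: Rmult_le_pos => //.
  by apply: prod_ge0 => i; exact: rpow_ge0.
have normM1 L := damped_pinv_norm_le_M1 sigma_ge0 sigma_mono hU hV hA L.
have bound : Rle (spec_norm Astar) (if mu == 0 then M1 else Rmin M1 M2).
  rewrite /Astar /lambda_of; case: (mu =P 0) => [_|mu_nz]; first exact: normM1.
  have mu_pos : Rlt 0 mu by move: mu_nz; toR => *; lra.
  case: Rlt_dec => d_pos.
    apply: Rmin_glb; first exact: normM1.
    exact: damped_pinv_norm_le_M2 sigma_ge0 hU hV hA _ _ mu_pos d_pos.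
  apply: spec_norm0_le; apply: Rmin_glb; last exact: M2_ge0.
  exact: M1_ge0 sigma_ge0 sigma_mono hU hV hA.
split=> // mu_pos; move: bound.
have -> : (mu == 0) = false by apply/eqP; move: mu_pos; toR => *; lra.
move=> /Rle_trans; apply; apply: Rle_trans (Rmin_r _ _) _.
apply: Rmult_le_compat_l; first exact: inv2mu_ge0.
exact: prod_rpow_sv_le sigma_ge0 sigma_mono hU hV hA nu nu0.
Qed.
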